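(* Let $K$ be a field of characteristic $0$, let $E$ be the infinite-dimensional unitary Grassmann algebra over $K$ with even part $E_0$, let $A=\begin{pmatrix} E_0 & E\\ 0 & E\end{pmatrix}$, and let $F_n(A)=K\langle x_1,\dots,x_n\rangle/(K\langle x_1,\dots,x_n\rangle\cap T(A))$. Let $n\geq 2$ be even and $m\geq n+2$. Then the polynomial \[f_{m,n}^{(2)}=[x_2,x_1,\dots,x_1][x_1,x_2][x_3,x_4]\cdots[x_{n-1},x_n],\] where the first factor is the left-normed commutator of length $m-n$ consisting of $x_2$ followed by $m-n-1$ copies of $x_1$, is not a polynomial identity of $F_n(A)$.
   Context: All algebras are associative and unitary over $K$; $T(A)$ is the ideal of polynomial identities of $A$. $E$ is generated by anticommuting $e_1,e_2,\dots$ and $E_0$ is the span of basis products of even length. Commutators: $[a,b]=ab-ba$, $[a_1,\dots,a_k]=[[a_1,\dots,a_{k-1}],a_k]$. The polynomial has total degree $m$. *)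

From HB Require Import structures.
From mathcomp Require Import all_boot all_order all_algebra.
Set Implicit Arguments. Unset Strict Implicit. Unset Printing Implicit Defensive.
Import Order.TTheory GRing.Theory Num.Theory.
Local Open Scope ring_scope.

Section Defs.
Variable K : fieldType.

(** Two terms denote the same polynomial iff they agree under every
    evaluation in every associative unitary K-algebra; we only ever use
    terms through evaluation in A, which is all T(A) depends on. *)
Inductive term : Type :=
  | Var of nat
  | Cst of K
  | Add of term & term
  | Mul of term & term.

Fixpoint vars_in (n : nat) (t : term) : bool :=
  match t with
  | Var i => (1 <= i <= n)%N
  | Cst _ => true
  | Add a b => vars_in n a && vars_in n b
  | Mul a b => vars_in n a && vars_in n b
  end.

Fixpoint subst (s : nat -> term) (t : term) : term :=
  match t with
  | Var i => s i
  | Cst c => Cst c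
  | Add a b => Add (subst s a) (subst s b)
  | Mul a b => Mul (subst s a) (subst s b)
  end.

Definition comm (a b : term) : term := Add (Mul a b) (Mul (Cst (-1)) (Mul b a)).

(** An element is a formal linear combination of words in the generators:
    [(c, [:: i1; ...; ik])] stands for c * e_{i1} ... e_{ik}.
    Its coefficient on the basis monomial e_S (S strictly increasing) is
    obtained by normalizing each word with the relations e_i e_j = - e_j e_i,
    e_i^2 = 0: a word with a repeated letter is 0, otherwise it equals
    (-1)^(number of inversions) times its sorted version. *)
Definition grass := seq (K * seq nat).

Fixpoint inversions (w : seq nat) : nat :=
  match w with
  | [::] => 0%N
  | x :: s => (count (fun y => y < x)%N s + inversions s)%N
  end.

Definition gcoef (x : grass) (S : seq nat) : K :=
  \sum_(p <- x | uniq p.2 && (sort leq p.2 == S)) (-1) ^+ inversions p.2 * p.1.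

Definition gzero (x : grass) : Prop := forall S, gcoef x S = 0.

Definition geven (x : grass) : Prop := forall S, odd (size S) -> gcoef x S = 0.

Definition gadd (x y : grass) : grass := x ++ y.
Definition gmul (x y : grass) : grass :=
  [seq (p.1 * q.1, p.2 ++ q.2) | p <- x, q <- y].
Definition gscal (c : K) : grass := [:: (c, [::])].

(** * A = [[E_0, E], [0, E]]; an element (a, b, c) is the matrix
    [[a, b], [0, c]], with a in E_0. *)
Definition Aelt := (grass * grass * grass)%type.

Definition Avalid (u : Aelt) : Prop := geven u.1.1.
Definition Azero (u : Aelt) : Prop := [/\ gzero u.1.1, gzero u.1.2 & gzero u.2].

Definition Aadd (u v : Aelt) : Aelt :=
  (gadd u.1.1 v.1.1, gadd u.1.2 v.1.2, gadd u.2 v.2).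
Definition Amul (u v : Aelt) : Aelt :=
  (gmul u.1.1 v.1.1, gadd (gmul u.1.1 v.1.2) (gmul u.1.2 v.2), gmul u.2 v.2).
Definition Ascal (c : K) : Aelt := (gscal c, [::], gscal c).

Fixpoint evalA (env : nat -> Aelt) (t : term) : Aelt :=
  match t with
  | Var i => env i
  | Cst c => Ascal c
  | Add a b => Aadd (evalA env a) (evalA env b)
  | Mul a b => Amul (evalA env a) (evalA env b)
  end.

Definition in_TA (f : term) : Prop :=
  forall env : nat -> Aelt, (forall i, Avalid (env i)) -> Azero (evalA env f).

(** f is a polynomial identity of the relatively free algebra
    F_n(A) = K<x_1..x_n> / (K<x_1..x_n> ∩ T(A)):  for every choice of
    elements g_i + T(A) of F_n(A) (g_i in K<x_1..x_n>), f(g_1, g_2, ...)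
    is zero in F_n(A), i.e. lies in T(A). *)
Definition PI_Fn (n : nat) (f : term) : Prop :=
  forall s : nat -> term, (forall i, vars_in n (s i)) -> in_TA (subst s f).

Definition lead_comm (m n : nat) : term :=
  iter (m - n - 1) (fun t => comm t (Var 1)) (Var 2).

Definition f2 (m n : nat) : term :=
  foldl (fun acc k => Mul acc (comm (Var k.*2.-1) (Var k.*2)))
        (lead_comm m n) (iota 1 n./2).

End Defs.

From mathcomp Require Import all_boot all_order all_algebra.
Set Implicit Arguments. Unset Strict Implicit. Unset Printing Implicit Defensive.
Import Order.TTheory GRing.Theory Num.Theory.

(* Evaluate x_1 = [[1,0],[0,e_1]], x_2 = [[0,1],[0,e_2]] and x_i = [[0,0],[0,e_i]]
   for i > 2. All commutators then have zero (1,1)-entry, so the (1,2)-entry of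
   f^(2)_{m,n} is the (1,2)-entry c of the leading commutator times the
   (2,2)-entries [e_{2i-1}, e_{2i}] = 2 e_{2i-1} e_{2i} of the other factors.
   Now c is (-1)^(m-n-1) plus terms divisible by e_1, which e_1 e_2 kills, so the
   coefficient of e_1 ... e_n in that entry is +-2^(n/2), nonzero in
   characteristic 0. *)

Lemma eqseq_cat_r (T : eqType) (s1 s2 s3 s4 : seq T) :
  size s3 = size s4 -> (s1 ++ s3 == s2 ++ s4) = (s1 == s2) && (s3 == s4).
Proof.
have eq_rev := inj_eq (can_inj (@revK T)).
by move=> eq_size; rewrite -eq_rev !rev_cat eqseq_cat ?size_rev // !eq_rev andbC.
Qed.

Section SeparatedWords.
Variables (L : nat) (u v : seq nat).
Hypotheses (u_lt : all (fun i => i < L) u) (v_ge : all (fun i => L <= i) v).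

Lemma inversions_cat_sep : inversions (u ++ v) = inversions u + inversions v.
Proof.
elim: u u_lt => [|a w IHw] //= /andP [a_lt w_lt].
rewrite IHw // count_cat.
have -> : count (fun y => y < a) v = 0.
  apply/eqP; rewrite -leqn0 leqNgt -has_count; apply/hasPn => i /(allP v_ge).
  by move=> L_le_i; rewrite -leqNgt (leq_trans (ltnW a_lt)).
by rewrite addn0 addnA.
Qed.

Lemma sort_cat_sep : sort leq (u ++ v) = sort leq u ++ sort leq v.
Proof.
have -> : sort leq (u ++ v) = sort leq (sort leq u ++ sort leq v).
  apply/perm_sortP; [exact: leq_total|exact: leq_trans|exact: anti_leq|].
  by apply: perm_cat; rewrite perm_sym perm_sort.
apply: sorted_sort; first exact: leq_trans.
rewrite (sorted_pairwise leq_trans) pairwise_cat.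
rewrite -!(sorted_pairwise leq_trans) !sort_sorted ?andbT //; try exact: leq_total.
apply/allrelP => i j; rewrite !mem_sort => /(allP u_lt) i_lt /(allP v_ge) j_ge.
exact: leq_trans (ltnW i_lt) j_ge.
Qed.

Lemma uniq_cat_sep : uniq (u ++ v) = uniq u && uniq v.
Proof.
rewrite cat_uniq; congr (_ && _); rewrite -[RHS]andTb; congr (_ && _).
apply/hasPn => i /(allP v_ge) L_le_i; apply/negP => /(allP u_lt) /=.
by rewrite ltnNge L_le_i.
Qed.

End SeparatedWords.

Local Open Scope ring_scope.

Section GrassmannCoefficients.
Variable K : fieldType.
Implicit Types (x y : grass K) (S : seq nat).

Definition words_in (P : pred (seq nat)) x := all (fun p => P p.2) x.

Lemma words_in_cat P x y : words_in P x -> words_in P y -> words_in P (x ++ y).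
Proof. by rewrite /words_in all_cat => -> ->. Qed.

Lemma words_in_gmul (P Q R : pred (seq nat)) x y :
  (forall u v, P u -> Q v -> R (u ++ v)) ->
  words_in P x -> words_in Q y -> words_in R (gmul x y).
Proof.
move=> PQR /allP Px /allP Qy; apply/allP => r /allpairsP [[p q] [/= xp yq ->]].
exact: PQR (Px _ xp) (Qy _ yq).
Qed.

Lemma gcoef_cat x y S : gcoef (x ++ y) S = gcoef x S + gcoef y S.
Proof. exact: big_cat. Qed.

Lemma gcoefE x S :
  gcoef x S = \sum_(p <- x)
    (if uniq p.2 && (sort leq p.2 == S) then (-1) ^+ inversions p.2 * p.1 else 0).
Proof. exact: big_mkcond. Qed.

Lemma gcoef_gmul x y S :
  gcoef (gmul x y) S =
  \sum_(p <- x) \sum_(q <- y)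
     (if uniq (p.2 ++ q.2) && (sort leq (p.2 ++ q.2) == S)
      then (-1) ^+ inversions (p.2 ++ q.2) * (p.1 * q.1) else 0).
Proof. by rewrite gcoefE big_allpairs_dep. Qed.

Lemma gcoef_gscal_mul c x S : gcoef (gmul (gscal c) x) S = c * gcoef x S.
Proof.
rewrite /gcoef /gmul /= cats0 big_map mulr_sumr.
by apply: eq_bigr => q _; rewrite mulrCA.
Qed.

(* Only the empty word of x contributes: any other word of x contains a, as does
   every word of y. *)
Lemma gcoef_gmul_absorb (a : nat) x y S :
  words_in (all (pred1 a)) x -> words_in (fun w => a \in w) y ->
  gcoef (gmul x y) S = gcoef x [::] * gcoef y S.
Proof.
move=> /allP x_a /allP y_a.
rewrite gcoef_gmul (gcoefE x) (gcoefE y) mulr_suml.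
apply: eq_big_seq => -[c [|b w]] /x_a /= xw; rewrite mulr_sumr.
  apply: eq_big_seq => q _; rewrite expr0 mul1r.
  by case: ifP; rewrite ?mulr0 // mulrCA.
move: xw => /andP [/eqP -> _].
have -> : (sort leq (a :: w) == [::]) = false by rewrite -size_eq0 size_sort.
rewrite andbF [RHS]big1 => [|q _]; last exact: mul0r.
apply: big1_seq => q /y_a a_in_q.
by rewrite mem_cat a_in_q orbT.
Qed.

Lemma gcoef_gmul_sep (L : nat) x y S1 S2 :
  words_in (all (fun i => (i < L)%N)) x ->
  words_in (fun w => all (fun i => (L <= i)%N) w && (size w == size S2)) y ->
  gcoef (gmul x y) (S1 ++ S2) = gcoef x S1 * gcoef y S2.
Proof.
move=> /allP x_lt /allP y_ge.
rewrite gcoef_gmul (gcoefE x) (gcoefE y) mulr_suml.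
apply: eq_big_seq => p /x_lt /= p_lt; rewrite mulr_sumr.
apply: eq_big_seq => q /y_ge /= /andP [q_ge /eqP q_size].
rewrite (uniq_cat_sep p_lt q_ge) (sort_cat_sep p_lt q_ge) (inversions_cat_sep p_lt q_ge).
rewrite eqseq_cat_r ?size_sort // exprD mulrACA.
by case: (uniq p.2); case: (uniq q.2); case: eqP; case: eqP; rewrite /= ?mulr0 ?mul0r.
Qed.

End GrassmannCoefficients.

Section Terms.
Variable K : fieldType.
Implicit Types (t : term K) (env : nat -> Aelt K).

Lemma evalA_subst env (s : nat -> term K) t :
  evalA env (subst s t) = evalA (fun i => evalA env (s i)) t.
Proof. by elim: t => //= a -> b ->. Qed.

Lemma eq_evalA n env1 env2 t :
  (forall i, (1 <= i <= n)%N -> env1 i = env2 i) -> vars_in n t ->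
  evalA env1 t = evalA env2 t.
Proof.
by move=> eq_env; elim: t => //= a IHa b IHb /andP [/IHa -> /IHb ->].
Qed.

Lemma PI_Fn_in_TA n t : PI_Fn n t -> vars_in n t -> in_TA t.
Proof.
move=> PIt t_vars env env_valid.
pose s i := if (1 <= i <= n)%N then Var K i else Cst 0.
have s_vars i : vars_in n (s i) by rewrite /s; case: ifP.
have := PIt s s_vars env env_valid.
by rewrite evalA_subst (@eq_evalA n _ env _ _ t_vars) // => i i_in; rewrite /s i_in.
Qed.

Definition lcomm k : term K := iter k (fun t => comm t (Var K 1)) (Var K 2).

Definition mul_pair t (k : nat) : term K := Mul t (comm (Var K k.*2.-1) (Var K k.*2)).

Lemma f2E m n : f2 K m n = foldl mul_pair (lcomm (m - n - 1)) (iota 1 n./2).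
Proof. by []. Qed.

Lemma vars_in_lcomm n k : (2 <= n)%N -> vars_in n (lcomm k).
Proof.
move=> n_ge2; elim: k => [|k IHk] /=; first by rewrite n_ge2.
by rewrite IHk (leq_trans _ n_ge2).
Qed.

Lemma vars_in_foldl_mul_pair n t ks :
  vars_in n t -> all (fun k => (0 < k) && (k.*2 <= n))%N ks ->
  vars_in n (foldl mul_pair t ks).
Proof.
elim: ks t => [|k ks IHks] t //= t_vars /andP [/andP [k_gt0 k_le] ks_ok].
apply: IHks => //=; rewrite t_vars k_le /=.
have pred_gt0 : (0 < k.*2.-1)%N by case: k k_gt0 {k_le} => // k _; rewrite doubleS.
by rewrite pred_gt0 (leq_trans pred_gt0 (leq_pred _)) (leq_trans (leq_pred _) k_le).
Qed.

Lemma vars_in_f2 m n : (2 <= n)%N -> vars_in n (f2 K m n).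
Proof.
move=> n_ge2; rewrite f2E; apply: vars_in_foldl_mul_pair; first exact: vars_in_lcomm.
apply/allP => k; rewrite mem_iota add1n ltnS => /andP [-> k_le] /=.
by rewrite -geq_half_double.
Qed.

End Terms.

Section Witness.
Variable K : fieldType.

Definition gen (i : nat) : grass K := [:: (1, [:: i])].

Definition witness (i : nat) : Aelt K :=
  if i == 1%N then (gscal 1, [::], gen 1)
  else if i == 2%N then ([::], gscal 1, gen 2)
  else ([::], [::], gen i).

Lemma witness_valid i : Avalid (witness i).
Proof.
rewrite /Avalid /witness; case: ifP => _ S odd_S; last by case: ifP; rewrite /gcoef big_nil.
by rewrite /gcoef big_cons big_nil; case: S odd_S.
Qed.

Lemma witness_22 i : (witness i).2 = gen i.
Proof. by rewrite /witness; case: eqP => [->|_] //; case: eqP => [->|]. Qed.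

Lemma gcoef_gmul_gen_nil (x : grass K) i : gcoef (gmul x (gen i)) [::] = 0.
Proof.
rewrite gcoef_gmul big1 // => p _; rewrite big_cons big_nil addr0.
by rewrite -size_eq0 size_sort size_cat addn1 andbF.
Qed.

Lemma lcomm_witness k :
  let T := evalA witness (lcomm K k) in
  [/\ T.1.1 = [::], words_in (all (pred1 1%N)) T.1.2 & gcoef T.1.2 [::] = (-1) ^+ k].
Proof.
elim: k => [|k [IH11 IH12 IH0]] /=.
  by split => //; rewrite /gcoef big_cons big_nil mulr1 addr0.
set T := evalA witness _ in IH11 IH12 IH0 *; rewrite IH11 /gadd !cats0 /=.
have all1 u v : all (pred1 1%N) u -> all (pred1 1%N) v -> all (pred1 1%N) (u ++ v).
  by rewrite all_cat => -> ->.
split => //.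
  apply: words_in_cat; first exact: (words_in_gmul all1 IH12).
  by apply: (words_in_gmul all1) => //; apply: (words_in_gmul all1).
by rewrite gcoef_cat gcoef_gmul_gen_nil add0r !gcoef_gscal_mul IH0 mul1r exprS mulN1r.
Qed.

Definition comm22 (a b : nat) : grass K :=
  (evalA witness (comm (Var K a) (Var K b))).2.

Lemma comm22E a b : comm22 a b = [:: (1 * 1, [:: a; b]); (-1 * (1 * 1), [:: b; a])].
Proof. by rewrite /comm22 /= !witness_22. Qed.

Lemma gcoef_comm22 a b : (a < b)%N -> gcoef (comm22 a b) [:: a; b] = 2%:R.
Proof.
move=> a_lt_b; rewrite comm22E /gcoef !big_cons big_nil /=.
have sorted_ab : sort leq [:: a; b] = [:: a; b].
  by apply: sorted_sort => /=; [exact: leq_trans | rewrite ltnW].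
have sorted_ba : sort leq [:: b; a] = [:: a; b].
  rewrite -sorted_ab.
  apply/perm_sortP; [exact: leq_total|exact: leq_trans|exact: anti_leq|].
  by rewrite perm_sym; apply/permP => P /=; rewrite !addn0 addnC.
rewrite !inE neq_ltn a_lt_b eq_sym neq_ltn a_lt_b orbT sorted_ab sorted_ba eqxx /=.
by rewrite ltnNge (ltnW a_lt_b) /= expr0 expr1 !mulr1 mulN1r opprK addr0.
Qed.

Lemma mul_pair_witness t k : (evalA witness t).1.1 = [::] ->
  (evalA witness (mul_pair t k)).1 =
  ([::], gmul (evalA witness t).1.2 (comm22 k.*2.-1 k.*2)).
Proof. by move=> /= ->. Qed.

Lemma pairs_witness k j :
  let T := evalA witness (foldl (@mul_pair K) (lcomm K k) (iota 1 j.+1)) in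
  [/\ T.1.1 = [::], words_in (all (fun i => (i < j.+1.*2.+1)%N)) T.1.2 &
      gcoef T.1.2 (iota 1 j.+1.*2) = (-1) ^+ k * 2%:R ^+ j.+1].
Proof.
have [L11 L12 L0] := lcomm_witness k.
have lt_cat (L L' : nat) u v : (L <= L')%N ->
    all (fun i => (i < L)%N) u -> all (fun i => (i < L')%N) v ->
    all (fun i => (i < L')%N) (u ++ v).
  move=> le_LL' u_lt v_lt; rewrite all_cat v_lt andbT.
  by apply: sub_all u_lt => i /leq_trans; apply.
elim: j => [|j [IH11 IH12 IH0]]; cbv zeta.
  rewrite [foldl _ _ _]/= mul_pair_witness //=; split=> //.
    apply: (words_in_gmul (fun u v => @lt_cat 2 3 u v isT)); last by rewrite comm22E.
    by apply: sub_all L12 => p; apply: sub_all => i /eqP ->.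
  by rewrite (gcoef_gmul_absorb _ L12) ?comm22E // -comm22E L0 gcoef_comm22.
have -> : iota 1 j.+2 = rcons (iota 1 j.+1) j.+2 by rewrite -cats1 -(iotaD 1 j.+1 1) addn1.
rewrite foldl_rcons mul_pair_witness // (doubleS j.+1).
set T := evalA witness _ in IH11 IH12 IH0 *.
set n := j.+1.*2 in IH12 IH0 *; clearbody n.
have -> : iota 1 n.+2 = iota 1 n ++ [:: n.+1; n.+2] by rewrite -(iotaD 1 n 2) addn2.
split=> //=.
  apply: (words_in_gmul (fun u v => @lt_cat n.+1 n.+3 u v (leqW (leqnSn _)))) => //.
  by rewrite comm22E /words_in /= !ltnS leqnn leqnSn.
rewrite (gcoef_gmul_sep _ IH12); last by rewrite comm22E /words_in /= leqnn leqnSn.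
by rewrite IH0 gcoef_comm22 // -mulrA -exprSr.
Qed.

Lemma gcoef_f2_witness m n : (2 <= n)%N -> ~~ odd n ->
  gcoef (evalA witness (f2 K m n)).1.2 (iota 1 n) = (-1) ^+ (m - n - 1) * 2%:R ^+ n./2.
Proof.
move=> n_ge2 n_even.
have n_double : n = n./2.*2 by rewrite -[LHS]odd_double_half (negbTE n_even).
rewrite f2E; case: n./2 n_double => [|j] n_double; first by rewrite n_double in n_ge2.
by have [_ _] := pairs_witness (m - n - 1) j; rewrite -n_double.
Qed.

End Witness.

Theorem lemma3p6 (K : fieldType) (charK0 : [pchar K]%R =i pred0)
  (n m : nat) (hn2 : (2 <= n)%N) (hneven : ~~ odd n) (hm : (n + 2 <= m)%N) :
  ~ PI_Fn n (f2 K m n).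
Proof.
move=> PI_f2.
have f2_TA := PI_Fn_in_TA PI_f2 (vars_in_f2 K m hn2).
have [_ /(_ (iota 1 n)) + _] := f2_TA _ (@witness_valid K).
rewrite gcoef_f2_witness //; apply/eqP.
by rewrite mulf_eq0 signr_eq0 expf_eq0 ((pcharf0P K).1 charK0) andbF.
Qed.
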